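(* Let $g,h\in\mathbb F_q[x,y]$ be nonzero with $(x^l-1)(y^m-1)=g(x,y)h(x,y)$ in $\mathbb F_q[x,y]$, and let $C=\langle g\rangle$, $C^*=\langle h^*\rangle$ be the ideals of $\mathfrak R$ generated by the images of $g$ and $h^*$. Assume $C\neq\{0\}$ and $C^*\ne\{0\}$. Then $C^*\subseteq C$ if and only if $g(x,y)g^*(x,y)$ divides $(x^l-1)(y^m-1)$ in $\mathbb F_q[x,y]$.
   Context: $\mathfrak R=\mathbb F_q[x,y]/\langle x^l-1,y^m-1\rangle$. For nonzero $f\in\mathbb F_q[x,y]$ with $l_1=\deg_x f$, $l_2=\deg_y f$, the reciprocal polynomial is $f^*(x,y)=x^{l_1}y^{l_2}f(x^{-1},y^{-1})$. *)

From HB Require Import structures.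
From mathcomp Require Import all_boot all_order all_algebra.
Set Implicit Arguments. Unset Strict Implicit. Unset Printing Implicit Defensive.
Import GRing.Theory.
Local Open Scope ring_scope.

(* Bivariate polynomials F[x,y] are represented as {poly {poly F}}:
   the outer variable is y, the inner variable is x. *)
Notation bipoly F := {poly {poly F}}.

Definition varX (F : fieldType) : bipoly F := ('X)%:P.
Definition varY (F : fieldType) : bipoly F := 'X.

Definition degY (F : fieldType) (f : bipoly F) : nat := (size f).-1.
Definition degX (F : fieldType) (f : bipoly F) : nat :=
  (\max_(j < size f) (size (nth 0%R f j)).-1)%N.

Definition bicoef (F : fieldType) (f : bipoly F) (i j : nat) : F := f`_j`_i.

(* Reciprocal polynomial f^*(x,y) = x^{deg_x f} y^{deg_y f} f(1/x,1/y):
   the coefficient of x^i y^j in f^* is that of x^(l1-i) y^(l2-j) in f. *)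
Definition recip (F : fieldType) (f : bipoly F) : bipoly F :=
  \poly_(j < (degY f).+1) \poly_(i < (degX f).+1)
     bicoef f (degX f - i) (degY f - j).

Definition xl1 (F : fieldType) (l : nat) : bipoly F := varX F ^+ l - 1.
Definition ym1 (F : fieldType) (m : nat) : bipoly F := varY F ^+ m - 1.

(* f1 and f2 have the same image in R = F[x,y]/<x^l-1, y^m-1>. *)
Definition congR (F : fieldType) (l m : nat) (f1 f2 : bipoly F) : Prop :=
  exists b c : bipoly F, f1 - f2 = b * xl1 F l + c * ym1 F m.

Definition inIdealR (F : fieldType) (l m : nat) (g f : bipoly F) : Prop :=
  exists a : bipoly F, congR l m f (a * g).

Definition idealR_nonzero (F : fieldType) (l m : nat) (g : bipoly F) : Prop :=
  exists f : bipoly F, inIdealR l m g f /\ ~ congR l m f 0.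

Definition idealR_sub (F : fieldType) (l m : nat) (h g : bipoly F) : Prop :=
  forall f : bipoly F, inIdealR l m h f -> inIdealR l m g f.

Definition bidvd (F : fieldType) (a b : bipoly F) : Prop :=
  exists k : bipoly F, b = k * a.

From HB Require Import structures.
From mathcomp Require Import all_boot all_order all_algebra.
From mathcomp Require Import zify ring.
From Stdlib Require Import Classical.
Set Implicit Arguments. Unset Strict Implicit. Unset Printing Implicit Defensive.
Import GRing.Theory.
Local Open Scope ring_scope.

(* Write p = x^l - 1 and q = y^m - 1. Peeling irreducible factors off p with
   Gauss's lemma in F[x][y] shows that g h = p(x) q(y) forces g = a(x) b(y) and
   h = c(x) d(y) with a c = p and b d = q. Reciprocals of such products are
   products of univariate reciprocals, and p^* = -p, q^* = -q, so
   g^* h^* = p q; hence g g^* | p q iff g | h^*, and g | h^* clearly puts h^*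
   in <g>. Conversely, reduce a relation h^* = e g + B p + C q modulo the monic
   q(y): since C^* <> 0, d^* is nonzero mod q, and comparing one coefficient
   gives a | c^*; symmetrically b | d^*, so g | h^*. *)

Section Reversal.
Variable R : idomainType.
Implicit Types p q : {poly R}.

Definition revp (n : nat) p : {poly R} := \poly_(k < n.+1) p`_(n - k).

Fact revp_is_linear n : linear (revp n).
Proof.
move=> a p q; apply/polyP => i.
by rewrite !(coefD, coefZ, coef_poly); case: ifP; rewrite ?mulr0 ?addr0.
Qed.

HB.instance Definition _ n :=
  GRing.isLinear.Build R {poly R} {poly R} _ (revp n) (revp_is_linear n).

Lemma revpXn n i : (i <= n)%N -> revp n 'X^i = 'X^(n - i).
Proof.
move=> le_in; apply/polyP => k; rewrite coef_poly !coefXn.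
case: ltnP => [lt_kn|le_nk]; first by congr (_ %:R); apply/eqP/eqP; lia.
by case: eqP => // ?; lia.
Qed.

Lemma poly_sum_coefs p n : (size p <= n)%N -> p = \sum_(i < n) p`_i *: 'X^i.
Proof.
move=> sp; rewrite -poly_def; apply/polyP => i; rewrite coef_poly.
by case: ltnP => // /(leq_trans sp) /leq_sizeP ->.
Qed.

Lemma revpM m n p q : (size p <= m.+1)%N -> (size q <= n.+1)%N ->
  revp (m + n) (p * q) = revp m p * revp n q.
Proof.
move=> /poly_sum_coefs -> /poly_sum_coefs ->.
rewrite mulr_suml !linear_sum mulr_suml; apply: eq_bigr => i _.
rewrite mulr_sumr !linear_sum mulr_sumr; apply: eq_bigr => j _ /=.
have [lt_im lt_jn] := (ltn_ord i, ltn_ord j).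
rewrite -scalerAl -scalerAr scalerA -exprD !linearZ /= !revpXn; try lia.
by rewrite -scalerAl -scalerAr scalerA -exprD; congr (_ *: 'X^_); lia.
Qed.

Definition recipp p := revp (size p).-1 p.

Lemma recippM p q : p != 0 -> q != 0 -> recipp (p * q) = recipp p * recipp q.
Proof.
move=> p0 q0; rewrite /recipp size_mul //.
have [sp sq] := (size_poly_gt0 p, size_poly_gt0 q); rewrite p0 q0 in sp sq.
have -> : (size p + size q).-2 = ((size p).-1 + (size q).-1)%N by lia.
by rewrite revpM ?leqSpred.
Qed.

Lemma recipp_Xn_sub1 n : (0 < n)%N -> recipp ('X^n - 1) = - ('X^n - 1).
Proof.
move=> n0; rewrite /recipp size_XnsubC // linearB /= -(expr0 'X) !revpXn //.
by rewrite subnn subn0 opprB.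
Qed.

End Reversal.

Section IrreducibleFactors.
Variable F : fieldType.
Local Notation bp := (bipoly F).
Implicit Types p q r u v : {poly F}.

Lemma irreducible_dvdp_exists p : (1 < size p)%N ->
  exists2 r, irreducible_poly r & r %| p.
Proof.
move: {2}(size p).+1 (ltnSn (size p)) => n; elim: n p => [|n IHn] p lt_pn sp //.
have [irr_p|red_p] := classic (irreducible_poly p); first by exists p.
have [q red_q] : exists q, ~ (size q != 1%N -> q %| p -> q %= p).
  by apply: not_all_ex_not => Hp; apply: red_p.
have [sq1 red_q'] := imply_to_and _ _ red_q.
have [qp not_eqp] := imply_to_and _ _ red_q'.
have p0 : p != 0 by rewrite -size_poly_gt0 ltnW.
have q0 : q != 0 by apply: contraTneq qp => ->; rewrite dvd0p.
have lt_qp : (size q < size p)%N.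
  by rewrite ltn_neqAle dvdp_leq // andbT dvdp_size_eqp //; apply/negP.
have sq : (1 < size q)%N by move: sq1 q0; rewrite -size_poly_gt0; lia.
have [r irr_r rq] := IHn q (leq_trans lt_qp lt_pn) sq.
by exists r => //; apply: dvdp_trans rq qp.
Qed.

Lemma irredp_dvdpM r u v : irreducible_poly r ->
  r %| u * v -> (r %| u) || (r %| v).
Proof.
move=> irr_r; have [//|nru] := boolP (r %| u).
by rewrite Gauss_dvdpr // irreducible_poly_coprime.
Qed.

Lemma dvdp_coefs_polyC r (G : bp) : (forall j, r %| G`_j) ->
  G = r%:P * map_poly (fun u => u %/ r) G.
Proof.
move=> rG; apply/polyP => j.
by rewrite coefCM coef_map_id0 ?div0p // mulrC divpK.
Qed.

Lemma irredp_dvd_coefsM r (G H : bp) : irreducible_poly r ->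
  (forall j, r %| (G * H)`_j) -> (forall j, r %| G`_j) \/ (forall j, r %| H`_j).
Proof.
move=> irr_r rGH; have r0 := irredp_neq0 irr_r.
pose red (K : bp) := map_poly (fun u => u %% r) K.
have coef_red K j : (red K)`_j = K`_j %% r by rewrite coef_map_id0 ?mod0p.
pose quo (K : bp) := map_poly (fun u => u %/ r) K.
have redE K : K = red K + r%:P * quo K.
  by apply/polyP => j; rewrite coefD coefCM coef_red coef_map_id0 ?div0p //
    mulrC addrC -divp_eq.
have red0 K : red K = 0 -> forall j, r %| K`_j.
  by move=> K0 j; apply/modp_eq0P; rewrite -coef_red K0 coef0.
have [/red0|G'0] := eqVneq (red G) 0; first by left.
have [/red0|H'0] := eqVneq (red H) 0; first by right.
have red_dvd K j : r %| (red K)`_j -> (red K)`_j = 0.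
  rewrite coef_red => rK; apply/eqP; apply: contraT => K0.
  by have := dvdp_leq K0 rK; rewrite leqNgt ltn_modp r0.
have : r %| lead_coef (red G * red H).
  have := rGH (size (red G * red H)).-1.
  have -> : G * H = red G * red H +
      r%:P * (quo G * red H + red G * quo H + r%:P * quo G * quo H).
    by rewrite {1}(redE G) {1}(redE H); ring.
  by rewrite coefD coefCM dvdp_addl // dvdp_mulr.
rewrite lead_coefM => /(irredp_dvdpM irr_r) /orP[] /red_dvd /eqP.
  by rewrite lead_coef_eq0 (negPf G'0).
by rewrite lead_coef_eq0 (negPf H'0).
Qed.

End IrreducibleFactors.

(* A bivariate polynomial is "split" when it has the form a(x) b(y),
   i.e. a%:P * b^:P. *)
Section SplitPolynomials.
Variable F : fieldType.
Local Notation bp := (bipoly F).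
Implicit Types a b c d p q r : {poly F}.

Lemma coef_split a b j : (a%:P * b^:P : bp)`_j = a * (b`_j)%:P.
Proof. by rewrite coefCM coef_map. Qed.

Lemma size_split a b : a != 0 -> size (a%:P * b^:P : bp) = size b.
Proof. by move=> a0; rewrite mul_polyC size_scale // size_map_polyC. Qed.

Lemma split_eq0 a b : (a%:P * b^:P == 0 :> bp) = (a == 0) || (b == 0).
Proof. by rewrite mulf_eq0 polyC_eq0 map_poly_eq0. Qed.

Lemma degX_split a b : a != 0 -> b != 0 -> degX (a%:P * b^:P) = (size a).-1.
Proof.
move=> a0 b0; rewrite /degX size_split //.
have size_coef j : size ((a%:P * b^:P : bp)`_j) = if b`_j == 0 then 0%N else size a.
  rewrite coef_split; case: eqP => [->|/eqP bj]; first by rewrite mulr0 size_poly0.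
  by rewrite mulrC mul_polyC size_scale.
apply/eqP; rewrite eqn_leq; apply/andP; split.
  by apply/bigmax_leqP => i _; rewrite size_coef; case: eqP.
have lt_b : ((size b).-1 < size b)%N by rewrite prednK // size_poly_gt0.
apply: (bigmax_sup (Ordinal lt_b)) => //=.
by rewrite size_coef -/(lead_coef b) lead_coef_eq0 (negPf b0).
Qed.

Lemma recip_split a b : a != 0 -> b != 0 ->
  recip (a%:P * b^:P) = (recipp a)%:P * (recipp b)^:P.
Proof.
move=> a0 b0; rewrite /recip degX_split // /degY size_split //.
apply/polyP => j; rewrite coef_poly coef_split [(recipp b)`_j]coef_poly.
case: ifP => _; last by rewrite mulr0.
apply/polyP => i; rewrite coef_poly coefMC coef_poly /bicoef coef_split coefMC.
by case: ifP => //; rewrite mul0r.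
Qed.

Lemma split_eq a b c d : a != 0 -> b != 0 -> c != 0 ->
  a%:P * b^:P = c%:P * d^:P :> bp ->
  exists2 k : F, k != 0 & a = k *: c /\ d = k *: b.
Proof.
move=> a0 b0 c0 E.
have Ej j : a * (b`_j)%:P = c * (d`_j)%:P by rewrite -!coef_split E.
have lb0 : lead_coef b != 0 by rewrite lead_coef_eq0.
pose k := d`_(size b).-1 / lead_coef b.
have Ea : a = k *: c.
  apply: (mulIf (x := (lead_coef b)%:P)); first by rewrite polyC_eq0.
  by rewrite -mul_polyC mulrAC -polyCM divfK // [RHS]mulrC; exact: Ej.
exists k; last split => //.
  by apply: contraNneq a0 => k0; rewrite Ea k0 scale0r.
apply/polyP => j; rewrite coefZ; apply: polyC_inj; apply: (mulfI c0).
by rewrite -Ej Ea -mul_polyC polyCM; ring.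
Qed.

Lemma map_polyC_factor d (g h : bp) : d != 0 -> g * h = d^:P -> exists b, g = b^:P.
Proof.
move=> d0 E; have gh0 : g * h != 0 by rewrite E map_poly_eq0.
have [g0 h0] : g != 0 /\ h != 0 by apply/andP; rewrite -negb_or -mulf_eq0.
have sg : (size (swapXY g) <= 1)%N.
  have := congr1 (fun u : bp => size (swapXY u)) E.
  rewrite /= rmorphM /= swapXY_map_polyC size_polyC d0 size_mul ?swapXY_eq0 // => Es.
  have : (0 < size (swapXY h))%N by rewrite size_poly_gt0 swapXY_eq0.
  (* [set] identifies differently elaborated copies of the sizes for [lia]. *)
  move: Es; rewrite -subn1; set x := size (swapXY g); set y := size (swapXY h); lia.
by exists (swapXY g)`_0; rewrite -swapXY_polyC -size1_polyC // swapXYK.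
Qed.

Lemma split_factor r d (g h : bp) : r != 0 -> d != 0 ->
  g * h = r%:P * d^:P -> exists a b, g = a%:P * b^:P.
Proof.
move: {2}(size r).+1 (ltnSn (size r)) => n.
elim: n r g h => [|n IHn] r g h lt_rn // r0 d0 E.
have [sr1|sr1] := leqP (size r) 1.
  have [b Eb] : exists b, g = b^:P.
    apply: (map_polyC_factor (d := r`_0 *: d) _ (h := h)).
      by rewrite scaler_eq0 negb_or d0 andbT -polyC_eq0 -size1_polyC.
    by rewrite E {1}(size1_polyC sr1) map_polyZ mul_polyC.
  by exists 1, b; rewrite polyC1 mul1r.
have [p irr_p pr] := irreducible_dvdp_exists sr1.
have p0 := irredp_neq0 irr_p.
have [r' Er] : exists r', r = r' * p by exists (r %/ p); rewrite divpK.
have r'0 : r' != 0 by apply: contraNneq r0 => r'0; rewrite Er r'0 mul0r.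
have lt_r'n : (size r' < n)%N.
  have := size_mul r'0 p0; have := irr_p.1; have := size_poly_gt0 r'.
  rewrite -Er r'0 -subn1; set x := size r'; set y := size p; set z := size r.
  lia.
have cancel_p (K : bp) : p%:P * K = r%:P * d^:P -> K = r'%:P * d^:P.
  move=> EK; apply: (mulfI (x := p%:P)); first by rewrite polyC_eq0.
  by rewrite EK {1}Er polyCM; ring.
have p_coefs j : p %| (g * h)`_j by rewrite E coef_split dvdp_mulr.
case: (irredp_dvd_coefsM irr_p p_coefs) => /dvdp_coefs_polyC Eq.
  set g1 := map_poly _ g in Eq.
  have [a [b Eab]] : exists a b, g1 = a%:P * b^:P.
    by apply: (IHn r' _ h lt_r'n r'0 d0); apply: cancel_p; rewrite mulrA -Eq.
  by exists (p * a), b; rewrite Eq Eab polyCM mulrA.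
set h1 := map_poly _ h in Eq.
by apply: (IHn r' g h1 lt_r'n r'0 d0); apply: cancel_p; rewrite mulrCA -Eq.
Qed.

Lemma split_scale k c d : k != 0 ->
  (k^-1 *: c)%:P * (k *: d)^:P = c%:P * d^:P :> bp.
Proof.
move=> k0; rewrite map_polyZ /= -!mul_polyC polyCM.
transitivity ((k^-1%:P * k%:P)%:P * (c%:P * d^:P) : bp); first by rewrite polyCM; ring.
by rewrite -polyCM mulVf // !polyC1 mul1r.
Qed.

Lemma split_factorization p q (g h : bp) : p != 0 -> q != 0 ->
  g * h = p%:P * q^:P ->
  exists a b c d, [/\ g = a%:P * b^:P, h = c%:P * d^:P, a * c = p & b * d = q].
Proof.
move=> p0 q0 E.
have [a [b Eg]] := split_factor p0 q0 E.
have [c [d Eh]] := split_factor p0 q0 (etrans (mulrC h g) E).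
have Eabcd : (a * c)%:P * (b * d)^:P = p%:P * q^:P.
  by rewrite -E Eg Eh polyCM rmorphM /=; ring.
have /andP[ac0 bd0] : (a * c != 0) && (b * d != 0).
  by rewrite -negb_or -split_eq0 Eabcd split_eq0 negb_or p0 q0.
have [k k0 [Eac Eq]] := split_eq ac0 bd0 p0 Eabcd.
exists a, b, (k^-1 *: c), (k *: d); split => //.
- by rewrite split_scale.
- by rewrite -scalerAr Eac scalerA mulVf // scale1r.
- by rewrite -scalerAr Eq.
Qed.

Lemma bidvd_mul2r (s g t : bp) : s != 0 ->
  bidvd (g * s) (t * s) <-> bidvd g t.
Proof.
move=> s0; split=> [[k Ek]|[k ->]]; exists k; last by rewrite mulrA.
by apply: (mulIf s0); rewrite Ek mulrA.
Qed.

Lemma split_bidvd (a b c d : {poly F}) : a %| c -> b %| d ->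
  bidvd (a%:P * b^:P) (c%:P * d^:P).
Proof.
move=> /dvdpP[u ->] /dvdpP[v ->]; exists (u%:P * v^:P).
by rewrite !rmorphM /=; ring.
Qed.

Lemma recip_split_mul (a b c d : {poly F}) :
  a != 0 -> b != 0 -> c != 0 -> d != 0 ->
  recip (a%:P * b^:P) * recip (c%:P * d^:P) =
  (recipp (a * c))%:P * (recipp (b * d))^:P.
Proof.
move=> a0 b0 c0 d0; rewrite !recip_split // !recippM //.
by rewrite rmorphM /= rmorphM /=; ring.
Qed.

Import Pdiv.CommonRing Pdiv.RingMonic.

Lemma dvdp_split_mod a c d q (Z W : bp) : q \is monic -> d %% q != 0 ->
  c%:P * d^:P = a%:P * Z + W * q^:P -> a %| c.
Proof.
move=> q_monic dq0 E; have Q_monic : q^:P \is monic := monic_map _ q_monic.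
have rmod_d : rmodp d^:P q^:P = (d %% q)^:P.
  rewrite {1}(divp_eq d q) rmorphD rmorphM /= rmodp_addl_mul_small //.
  by rewrite !size_map_polyC ltn_modp monic_neq0.
have := congr1 (fun u : bp => rmodp u q^:P) E.
rewrite /= !mul_polyC rmodpD // rmodp_mull // addr0 !rmodpZ // rmod_d.
set t := d %% q in dq0 * => Ec.
have := congr1 (fun u : bp => u`_(size t).-1) Ec.
rewrite /= !coefZ coef_map /= -/(lead_coef t) => Eck.
have lt0 : lead_coef t != 0 by rewrite lead_coef_eq0.
by rewrite -(dvdpZr _ _ lt0) -mul_polyC mulrC Eck dvdp_mulIl.
Qed.

End SplitPolynomials.

Section QuotientIdeals.
Variables (F : fieldType) (l m : nat).
Local Notation bp := (bipoly F).
Local Notation p := ('X^l - 1 : {poly F}).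
Local Notation q := ('X^m - 1 : {poly F}).
Implicit Types (a b c d : {poly F}) (f g k : bp).

Lemma xl1E : xl1 F l = p%:P.
Proof. by rewrite /xl1 /varX rmorphB /= rmorphXn rmorph1. Qed.

Lemma ym1E : ym1 F m = q^:P.
Proof. by rewrite /ym1 /varY rmorphB /= map_polyXn rmorph1. Qed.

Lemma modulus_pos : xl1 F l * ym1 F m != 0 -> (0 < l)%N /\ (0 < m)%N.
Proof.
move=> M0; rewrite !lt0n; split; apply: contraNneq M0 => ->.
  by rewrite /xl1 expr0 subrr mul0r.
by rewrite /ym1 expr0 subrr mulr0.
Qed.

Lemma inIdealR_mull k g : inIdealR l m g (k * g).
Proof. by exists k, 0, 0; rewrite subrr !mul0r addr0. Qed.

Lemma inIdealR_trans g f f' :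
  inIdealR l m g f -> inIdealR l m f f' -> inIdealR l m g f'.
Proof.
move=> [e [B [C Ef]]] [e' [B' [C' Ef']]].
exists (e' * e), (B' + e' * B), (C' + e' * C).
have -> : f' - e' * e * g = (f' - e' * f) + e' * (f - e * g) by ring.
by rewrite Ef' Ef; ring.
Qed.

Lemma idealR_subP f g : idealR_sub l m f g <-> inIdealR l m g f.
Proof.
split=> [sub_fg|gf f' ff']; last exact: inIdealR_trans ff'.
by apply: sub_fg; have := inIdealR_mull 1 f; rewrite mul1r.
Qed.

Lemma inIdealR_congR0 g f : congR l m g 0 -> inIdealR l m g f -> congR l m f 0.
Proof.
move=> [B [C Eg]] [e [B' [C' Ef]]]; exists (B' + e * B), (C' + e * C).
have -> : f - 0 = (f - e * g) + e * (g - 0) by ring.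
by rewrite Ef Eg; ring.
Qed.

Lemma idealR_nonzero_split c d : idealR_nonzero l m (c%:P * d^:P) ->
  c %% p != 0 /\ d %% q != 0.
Proof.
move=> [f [cd_f f_neq0]]; split; apply/negP => /eqP/modp_eq0P/divpK Ec;
  apply: f_neq0; apply: inIdealR_congR0 cd_f.
- by exists ((c %/ p)%:P * d^:P), 0; rewrite subr0 -{1}Ec polyCM xl1E; ring.
- by exists 0, (c%:P * (d %/ q)^:P); rewrite subr0 -{1}Ec rmorphM ym1E /=; ring.
Qed.

Lemma split_dvdp_of_inIdealR a b c d : (0 < l)%N -> (0 < m)%N ->
  a %| p -> b %| q -> c %% p != 0 -> d %% q != 0 ->
  inIdealR l m (a%:P * b^:P) (c%:P * d^:P) -> a %| c /\ b %| d.
Proof.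
move=> l0 m0 /dvdpP[a' Ep] /dvdpP[b' Eq] cp dq [e [B [C E]]].
rewrite xl1E ym1E in E.
have {}E : c%:P * d^:P = e * (a%:P * b^:P) + B * p%:P + C * q^:P.
  by rewrite -[LHS](subrK (e * (a%:P * b^:P))) E; ring.
split.
  apply: (dvdp_split_mod (monicXnsubC 1 m0) dq
    (Z := e * b^:P + B * a'%:P) (W := C)).
  by rewrite E Ep polyCM; ring.
apply: (dvdp_split_mod (monicXnsubC 1 l0) cp (Z := swapXY (e * a%:P + C * b'^:P))
  (W := swapXY B)).
apply: (can_inj (@swapXYK _)); rewrite rmorphD !rmorphM /= !swapXYK.
by rewrite !swapXY_polyC !swapXY_map_polyC mulrC E Eq rmorphM /=; ring.
Qed.

End QuotientIdeals.

Theorem mainTheorem4 (F : finFieldType) (l m : nat) (g h : bipoly F) :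
  g != 0 -> h != 0 ->
  xl1 F l * ym1 F m = g * h ->
  idealR_nonzero l m g ->
  idealR_nonzero l m (recip h) ->
  (idealR_sub l m (recip h) g <-> bidvd (g * recip g) (xl1 F l * ym1 F m)).
Proof.
move=> g0 h0 E _ NZ.
have [l0 m0] : (0 < l)%N /\ (0 < m)%N.
  by apply: (modulus_pos (F := F)); rewrite E mulf_neq0.
rewrite xl1E ym1E in E *.
have [a [b [c [d [Eg Eh Eac Ebd]]]]] := split_factorization
  (monic_neq0 (monicXnsubC 1 l0)) (monic_neq0 (monicXnsubC 1 m0)) (esym E).
have /norP[a0 b0] : ~~ ((a == 0) || (b == 0)) by rewrite -split_eq0 -Eg.
have /norP[c0 d0] : ~~ ((c == 0) || (d == 0)) by rewrite -split_eq0 -Eh.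
have Erec : recip h * recip g = ('X^l - 1)%:P * ('X^m - 1)^:P.
  rewrite mulrC Eg Eh recip_split_mul // Eac Ebd !recipp_Xn_sub1 //.
  by rewrite !rmorphN /= mulrNN.
have rg0 : recip g != 0.
  by apply: contraTneq (mulf_neq0 g0 h0) => rg0; rewrite -E -Erec rg0 mulr0 eqxx.
rewrite idealR_subP -Erec bidvd_mul2r //.
split=> [|[k ->]]; last exact: inIdealR_mull.
rewrite Eg Eh !recip_split // in NZ * => g_rh.
have [cp dq] := idealR_nonzero_split NZ.
have [||ac bd] := split_dvdp_of_inIdealR l0 m0 _ _ cp dq g_rh; last exact: split_bidvd.
- by rewrite -Eac dvdp_mulIl.
- by rewrite -Ebd dvdp_mulIl.
Qed.
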